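(* Let $\widetilde L$ be a standardized Laplacian matrix of order $n$, and let $P=\widetilde L+J$ and $\widetilde L_c=K-\widetilde L$. Then for every complex $\lambda\notin\{0,1\}$ the following are equivalent: (a) $\lambda\in\operatorname{sp}\widetilde L$; (b) $\lambda\in\operatorname{sp}P$; (c) $1-\lambda\in\operatorname{sp}\widetilde L_c$; and these eigenvalues have the same geometric multiplicity. Furthermore, for $\lambda\notin\{0,1\}$, a vector $v$ is an eigenvector of $\widetilde L$ corresponding to $\lambda$ if and only if $x=\big(I-\frac{1}{1-\lambda}J\big)v$ is an eigenvector of $P$ corresponding to $\lambda$ and an eigenvector of $\widetilde L_c$ corresponding to $1-\lambda$.
   Context: A standardized Laplacian matrix of order $n$ is a real $n\times n$ matrix whose row sums are all $0$ and whose off-diagonal entries are nonpositive with absolute value at most $1/n$. $J$ is the $n\times n$ matrix with all entries $1/n$, and $K=I-J$. $\operatorname{sp}A$ denotes the spectrum of $A$. *)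

(* Complex numbers are modelled by an arbitrary
   numClosedFieldType C (e.g. algC); "real" entries are those in Num.real. *)
From HB Require Import structures.
From mathcomp Require Import all_boot all_order all_algebra.
Set Implicit Arguments. Unset Strict Implicit. Unset Printing Implicit Defensive.
Import Order.TTheory GRing.Theory Num.Theory.
Local Open Scope ring_scope.

Definition Jmx (C : numClosedFieldType) (n : nat) : 'M[C]_n := const_mx (n%:R^-1).

Definition Kmx (C : numClosedFieldType) (n : nat) : 'M[C]_n := 1%:M - Jmx C n.

Definition std_laplacian (C : numClosedFieldType) (n : nat) (L : 'M[C]_n) : Prop :=
  (forall i j, L i j \is Num.real) /\
  (forall i, \sum_(j < n) L i j = 0) /\
  (forall i j, i != j -> L i j <= 0 /\ `|L i j| <= n%:R^-1).

Definition col_eigenvector (C : numClosedFieldType) (n : nat) (A : 'M[C]_n)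
  (lam : C) (v : 'cV[C]_n) : Prop :=
  v != 0 /\ A *m v = lam *: v.

Definition geom_mult (C : numClosedFieldType) (n : nat) (A : 'M[C]_n) (lam : C) : nat :=
  \rank (eigenspace A lam).

From HB Require Import structures.
From mathcomp Require Import all_boot all_order all_algebra.
From mathcomp Require Import ring.
Set Implicit Arguments. Unset Strict Implicit. Unset Printing Implicit Defensive.
Import Order.TTheory GRing.Theory Num.Theory.
Local Open Scope ring_scope.

(* J is idempotent and, since the rows of L sum to 0, L J = 0.
   The "shear" matrices S_a = I - a J compose as S_b S_a = S_(a + b - b a),
   so for lam <> 0, 1 the matrix S = S_(1/(1-lam)) is invertible with inverse
   S_(1/lam).  A direct computation gives (P - lam I) S = L - lam I, i.e. the
   characteristic matrices of L and P differ by an invertible right factor;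
   hence they have kernels of equal dimension and S maps the lam-eigenvectors
   of L bijectively onto those of P.  Finally L_c = K - L = I - P, and the
   complement B |-> I - B sends lam-eigen-data of B to (1 - lam)-eigen-data. *)

Lemma char_mx_kerP (R : pzRingType) (n : nat) (A : 'M[R]_n) (c : R)
  (w : 'cV[R]_n) : A *m w = c *: w <-> (A - c%:M) *m w = 0.
Proof.
rewrite mulmxBl mul_scalar_mx; split=> [->|/eqP]; first by rewrite subrr.
by rewrite subr_eq0 => /eqP.
Qed.

Section EigenData.
Variables (C : numClosedFieldType) (n : nat).
Implicit Types (A B U : 'M[C]_n) (c d : C) (w : 'cV[C]_n).

Lemma geom_mult_corank A c : geom_mult A c = (n - \rank (A - c%:M)%R)%N.
Proof. by rewrite /geom_mult /eigenspace mxrank_ker. Qed.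

Lemma eigenvalue_geom_mult A c : eigenvalue A c = (geom_mult A c != 0%N).
Proof. by rewrite /eigenvalue /geom_mult mxrank_eq0. Qed.

Section UnitFactor.
Variables (A B U : 'M[C]_n) (c d : C).
Hypotheses (U_unit : U \in unitmx) (charAB : (B - d%:M) *m U = A - c%:M).

Lemma geom_mult_unit_factor : geom_mult A c = geom_mult B d.
Proof.
by rewrite !geom_mult_corank -charAB mxrankMfree // row_free_unit.
Qed.

Lemma col_eigenvector_unit_factor w :
  col_eigenvector A c w <-> col_eigenvector B d (U *m w).
Proof.
have Uw0 : (U *m w == 0) = (w == 0).
  apply/eqP/eqP=> [|->]; last by rewrite mulmx0.
  by move/(congr1 (mulmx (invmx U))); rewrite mulmxA mulVmx // mul1mx mulmx0.
rewrite /col_eigenvector Uw0.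
split=> -[w0 /char_mx_kerP eig_w]; split=> //; apply/char_mx_kerP.
  by rewrite mulmxA charAB.
by rewrite -charAB -mulmxA.
Qed.

End UnitFactor.

Lemma char_mx_compl B c : (1%:M - B) - (1 - c)%:M = - (B - c%:M).
Proof. by rewrite raddfB /= !opprB addrC addrA subrK. Qed.

Lemma geom_mult_compl B c : geom_mult (1%:M - B) (1 - c) = geom_mult B c.
Proof. by rewrite !geom_mult_corank char_mx_compl mxrank_opp. Qed.

Lemma col_eigenvector_compl B c w :
  col_eigenvector (1%:M - B) (1 - c) w <-> col_eigenvector B c w.
Proof.
split=> -[w0 /char_mx_kerP eig_w]; split=> //; apply/char_mx_kerP.
  by move/eqP: eig_w; rewrite char_mx_compl mulNmx oppr_eq0 => /eqP.
by rewrite char_mx_compl mulNmx eig_w oppr0.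
Qed.

End EigenData.

Section Shear.
Variables (C : numClosedFieldType) (n : nat).
Local Notation J := (Jmx C n).

(* J is idempotent (each entry of J^2 is n * (1/n)^2 = 1/n). *)
Lemma Jmx_idem : J *m J = J.
Proof.
apply/matrixP => i j; rewrite !mxE.
have n0 : (n%:R : C) != 0 by rewrite pnatr_eq0 -lt0n (leq_ltn_trans _ (ltn_ord i)).
under eq_bigr do rewrite !mxE.
by rewrite sumr_const card_ord -mulrnAr -(mulr_natr (n%:R^-1 : C)) mulVf // mulr1.
Qed.

Lemma zero_rowsum_mulJ (M : 'M[C]_n) :
  (forall i, \sum_(j < n) M i j = 0) -> M *m J = 0.
Proof.
move=> rowsum0; apply/matrixP => i j; rewrite !mxE.
under eq_bigr do rewrite !mxE.
by rewrite -mulr_suml rowsum0 mul0r.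
Qed.

Definition shear (a : C) : 'M[C]_n := 1%:M - a *: J.

Lemma shear_mul (a b : C) : shear b *m shear a = shear (a + b - b * a).
Proof.
rewrite /shear mulmxBl !mulmxBr !mul1mx mulmx1 -!scalemxAl -!scalemxAr.
rewrite Jmx_idem scalerA !scalerDl scaleNr.
by rewrite !opprD !opprK !addrA [_ + (b * a) *: _]addrC !addrA.
Qed.

Section Eigen.
Variable lam : C.
Hypotheses (lam0 : lam != 0) (lam1 : lam != 1).

Let lamC0 : 1 - lam != 0. Proof. by rewrite subr_eq0 eq_sym. Qed.

Lemma shear_unit : shear (1 - lam)^-1 \in unitmx.
Proof.
have param0 : lam^-1 + (1 - lam)^-1 - (1 - lam)^-1 * lam^-1 = 0.
  by field; rewrite lam0 lamC0.
suff inv : shear (1 - lam)^-1 *m shear lam^-1 = 1%:M by case: (mulmx1_unit inv).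
by rewrite shear_mul param0 /shear scale0r subr0.
Qed.

Lemma char_mx_shear (M : 'M[C]_n) : M *m J = 0 ->
  (M + J - lam%:M) *m shear (1 - lam)^-1 = M - lam%:M.
Proof.
move=> MJ0; rewrite /shear mulmxBr mulmx1 -scalemxAr !mulmxDl MJ0 add0r.
rewrite Jmx_idem mulNmx mul_scalar_mx.
have -> : (1 - lam)^-1 *: (J - lam *: J) = J.
  by rewrite -{1}(scale1r J) -scalerBl scalerA mulVf // scale1r.
by rewrite addrAC addrK.
Qed.

End Eigen.
End Shear.

Theorem theorem4 (C : numClosedFieldType) (n : nat) (L : 'M[C]_n)
  (hL : std_laplacian L) (lam : C) (h0 : lam != 0) (h1 : lam != 1) :
  let P := L + Jmx C n in
  let Lc := Kmx C n - L in
  [/\ (eigenvalue L lam <-> eigenvalue P lam),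
      (eigenvalue L lam <-> eigenvalue Lc (1 - lam)),
      geom_mult L lam = geom_mult P lam,
      geom_mult L lam = geom_mult Lc (1 - lam) &
      forall v : 'cV[C]_n,
        col_eigenvector L lam v <->
        (col_eigenvector P lam ((1%:M - (1 - lam)^-1 *: Jmx C n) *m v) /\
         col_eigenvector Lc (1 - lam) ((1%:M - (1 - lam)^-1 *: Jmx C n) *m v))].
Proof.
move=> P Lc; case: hL => _ [rowsum0 _].
have charLP := char_mx_shear h1 (zero_rowsum_mulJ rowsum0).
have S_unit := shear_unit n h0 h1.
have Lc_compl : Lc = 1%:M - P by rewrite /Lc /P /Kmx opprD addrA addrAC.
have multLP : geom_mult L lam = geom_mult P lam :=
  geom_mult_unit_factor S_unit charLP.
have multLLc : geom_mult L lam = geom_mult Lc (1 - lam)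
  by rewrite Lc_compl geom_mult_compl.
split=> //.
- by rewrite !eigenvalue_geom_mult multLP.
- by rewrite !eigenvalue_geom_mult multLLc.
move=> v; rewrite Lc_compl col_eigenvector_compl.
have := col_eigenvector_unit_factor S_unit charLP v.
by rewrite /shear; tauto.
Qed.
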